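(* In the multidimensional knapsack problem, let $x^*$ be a basic optimal solution of the LP relaxation with value $V^*=\sum_iv_ix_i^*$, and let $q_{\max}:=\max_{i,j}w_{ij}/B_j$, assumed positive. If $k$ is an item with $0<x_k^*<1$, then $v_k\le q_{\max}V^*$.
   Context: Multidimensional knapsack: a finite set of items $i$, each with value $v_i\ge0$ and weight vector $(w_{i1},\dots,w_{im})\in\mathbb{R}_+^m$, and capacities $B_1,\dots,B_m>0$. The LP relaxation maximizes $\sum_iv_ix_i$ subject to $0\le x_i\le1$ for all $i$ and $\sum_iw_{ij}x_i\le B_j$ for all $j$. *)

From mathcomp Require Import all_boot all_order all_algebra.
Set Implicit Arguments. Unset Strict Implicit. Unset Printing Implicit Defensive.
Import Order.TTheory GRing.Theory Num.Theory.
Local Open Scope ring_scope.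

Section MKP.
Variables (R : realFieldType) (n m : nat).
Variables (w : 'I_n -> 'I_m -> R) (B : 'I_m -> R).

Definition lp_feasible (x : 'I_n -> R) : Prop :=
  (forall i, 0 <= x i <= 1) /\
  (forall j, \sum_(i < n) w i j * x i <= B j).

Definition lp_value (v : 'I_n -> R) (x : 'I_n -> R) : R :=
  \sum_(i < n) v i * x i.

Definition lp_optimal (v : 'I_n -> R) (x : 'I_n -> R) : Prop :=
  lp_feasible x /\ forall y, lp_feasible y -> lp_value v y <= lp_value v x.

(* Basic solution: the constraints active at x (bounds x_i = 0 or x_i = 1,
   and tight capacities) have full column rank n, i.e. the only direction d
   annihilated by all active constraint rows is d = 0. *)
Definition lp_basic (x : 'I_n -> R) : Prop :=
  lp_feasible x /\
  forall d : 'I_n -> R,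
    (forall i, (x i == 0) || (x i == 1) -> d i = 0) ->
    (forall j, \sum_(i < n) w i j * x i = B j -> \sum_(i < n) w i j * d i = 0) ->
    forall i, d i = 0.

(* q_max := max_{i,j} w_ij / B_j (all ratios are >= 0, so 0 is a neutral
   start; q_max > 0 forces the range to be nonempty). *)
Definition qmax : R := \big[Num.max/0]_(i < n) \big[Num.max/0]_(j < m) (w i j / B j).

End MKP.

(* Move a fraction s of the optimum x toward the point c e_k, where c >= 0 is
   chosen so that c e_k fits into every capacity (c = 1/q_max does). The box
   constraint on item k survives for small s because x_k < 1, and comparing
   objective values gives s v_k c <= s V*, i.e. v_k <= q_max V*. *)
From mathcomp Require Import all_boot all_order all_algebra.
From mathcomp Require Import lra.
Import Order.TTheory GRing.Theory Num.Theory.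
Set Implicit Arguments.
Unset Strict Implicit.
Unset Printing Implicit Defensive.
Local Open Scope ring_scope.

Section KnapsackLP.
Variables (R : realFieldType) (n m : nat).
Variables (w : 'I_n -> 'I_m -> R) (B : 'I_m -> R).

Lemma lp_valueD (f x z : 'I_n -> R) (a b : R) :
  lp_value f (fun i => a * x i + b * z i)
  = a * lp_value f x + b * lp_value f z.
Proof.
rewrite /lp_value !mulr_sumr -big_split /=.
by apply: eq_bigr => i _; rewrite mulrDr (mulrCA a) (mulrCA b).
Qed.

Lemma lp_value_delta (f : 'I_n -> R) (k : 'I_n) (c : R) :
  lp_value f (fun i => (i == k)%:R * c) = f k * c.
Proof.
rewrite /lp_value (bigD1 k) //= eqxx mul1r big1 ?addr0 // => i /negbTE ->.
by rewrite mul0r mulr0.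
Qed.

Lemma lp_feasible_toward_item (x : 'I_n -> R) (k : 'I_n) (s c : R) :
    lp_feasible w B x -> 0 <= c -> (forall j, w k j * c <= B j) ->
    0 <= s <= 1 -> (1 - s) * x k + s * c <= 1 ->
  lp_feasible w B (fun i => (1 - s) * x i + s * ((i == k)%:R * c)).
Proof.
move=> [box cap] c_ge0 ck_cap /andP[s_ge0 s_le1] yk_le1; split.
  move=> i; have /andP[xi_ge0 xi_le1] := box i.
  have sx_ge0 : 0 <= (1 - s) * x i by rewrite mulr_ge0 // subr_ge0.
  case: (eqVneq i k) sx_ge0 => [->|ik] sx_ge0.
    by rewrite mul1r yk_le1 andbT; apply: addr_ge0 => //; apply: mulr_ge0.
  by rewrite mul0r mulr0 addr0 sx_ge0 /=; nra.
move=> j; rewrite -[leLHS]/(lp_value (fun i => w i j) _) lp_valueD lp_value_delta.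
have -> : B j = (1 - s) * B j + s * B j by rewrite mulrBl mul1r subrK.
by apply: lerD; [rewrite ler_wpM2l ?subr_ge0 ?cap | rewrite ler_wpM2l ?ck_cap].
Qed.

Lemma toward_item_step_exists (a c : R) :
  0 <= a < 1 -> 0 <= c -> exists2 s, 0 < s <= 1 & (1 - s) * a + s * c <= 1.
Proof.
move=> /andP[a_ge0 a_lt1] c_ge0.
have c1_gt0 : 0 < 1 + c by lra.
exists ((1 - a) / (1 + c)).
  rewrite divr_gt0 ?subr_gt0 //= ler_pdivrMr // mul1r; lra.
have sc_le : (1 - a) / (1 + c) * c <= 1 - a.
  rewrite mulrAC ler_pdivrMr // ler_pM2l ?subr_gt0 //; lra.
have s_ge0 : 0 <= (1 - a) / (1 + c) by rewrite divr_ge0 ?subr_ge0 ?ltW.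
have : (1 - a) / (1 + c) * a >= 0 by rewrite mulr_ge0.
rewrite mulrBl mul1r; lra.
Qed.

Lemma lp_optimal_ge_item (v x : 'I_n -> R) (k : 'I_n) (c : R) :
    lp_optimal w B v x -> x k < 1 -> 0 <= c -> (forall j, w k j * c <= B j) ->
  v k * c <= lp_value v x.
Proof.
move=> [feas opt] xk_lt1 c_ge0 ck_cap.
have xk_ge0 : 0 <= x k by have /andP[] := feas.1 k.
have [s /andP[s_gt0 s_le1] yk_le1] :=
  toward_item_step_exists (introT andP (conj xk_ge0 xk_lt1)) c_ge0.
have := opt _ (lp_feasible_toward_item feas c_ge0 ck_cap
  (introT andP (conj (ltW s_gt0) s_le1)) yk_le1).
rewrite lp_valueD lp_value_delta mulrBl mul1r => le_opt.
by rewrite -(ler_pM2l s_gt0); lra.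
Qed.

Lemma weight_le_qmax (i : 'I_n) (j : 'I_m) :
  0 < B j -> w i j <= qmax w B * B j.
Proof.
move=> Bj_gt0; rewrite -ler_pdivrMr //.
apply: le_trans (le_bigmax _ (fun i => \big[Num.max/0]_(j < m) (w i j / B j)) i).
exact: (le_bigmax _ (fun j => w i j / B j)).
Qed.

End KnapsackLP.

Theorem lemma5 (R : realFieldType) (n m : nat)
    (v : 'I_n -> R) (w : 'I_n -> 'I_m -> R) (B : 'I_m -> R)
    (hv : forall i, 0 <= v i) (hw : forall i j, 0 <= w i j)
    (hB : forall j, 0 < B j)
    (x : 'I_n -> R)
    (hopt : lp_optimal w B v x) (hbasic : lp_basic w B x)
    (hq : 0 < qmax w B)
    (k : 'I_n) (hk : 0 < x k < 1) :
  v k <= qmax w B * lp_value v x.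
Proof.
have ck_cap j : w k j * (qmax w B)^-1 <= B j.
  by rewrite -ler_pdivlMr ?invr_gt0 // invrK mulrC weight_le_qmax.
have qinv_ge0 : 0 <= (qmax w B)^-1 by rewrite invr_ge0 ltW.
have := lp_optimal_ge_item hopt (proj2 (andP hk)) qinv_ge0 ck_cap.
by rewrite ler_pdivrMr // mulrC.
Qed.
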